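(* Let $\Delta,\Gamma\in\mathbb{R}$ with $2+3\Delta\Gamma\neq 0$, define $$\sigma:=3\Gamma(1+\Delta\Gamma),\qquad s_1^2:=\Gamma\,\frac{2+3\Delta\Gamma}{1+\Delta\Gamma+(1-\Delta)(1+3\Delta\Gamma+3\Delta^2\Gamma^2)},$$ and assume that the denominator is nonzero and $s_1^2>0$ (this holds in particular whenever $0\le\Delta\le1$ and $\Gamma>0$). For a unit vector $\mathbf{k}\in S^2$, define the linear map $P(\mathbf{k})$ on state vectors $V=(K_{ab},N_{ab},a_b)\in\mathbb{R}^{9}\times\mathbb{R}^9\times\mathbb{R}^3$ by $P(\mathbf{k})V=(\tilde K_{ab},\tilde N_{ab},\tilde a_b)$ with $$\tilde K_{ab}=\varepsilon_a{}^{cd}k_cN_{db}+k_aa_b-\frac{\Delta}{2+3\Delta\Gamma}\delta_{ab}\Big[(\Gamma-\sigma)\varepsilon^{fcd}k_fN_{cd}+(1+\Gamma+\Delta\sigma)k^ca_c\Big],$$ $$\tilde N_{ab}=-\varepsilon_a{}^{cd}k_cK_{db}+\Delta\Gamma\,\varepsilon_{ab}{}^ck_cK,\qquad \tilde a_b=s_1^2k^aK_{ab}+\big[\Gamma-s_1^2(1+\Delta\Gamma)\big]k_bK.$$ Let $H$ be the ($\mathbf{k}$-independent) symmetric positive-definite matrix defined by $V^THV:=K^{ab}K_{ab}+N^{ab}N_{ab}+s_1^{-2}a^ba_b$. Then $V_1^THP(\mathbf{k})V_2=V_2^THP(\mathbf{k})V_1$ for all state vectors $V_1,V_2$ and all $\mathbf{k}\in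 S^2$, i.e. $HP(\mathbf{k})=P(\mathbf{k})^TH$; thus the family $P(\mathbf{k})$ is symmetric hyperbolic.
   Context: Indices $a,b,c,d,f\in\{1,2,3\}$ are raised and lowered with $\delta_{ab}$, repeated indices are summed, $\varepsilon_{abc}$ is the totally antisymmetric symbol with $\varepsilon_{123}=1$, and $K:=\delta^{ab}K_{ab}$. $K_{ab}$ and $N_{ab}$ are arbitrary (not necessarily symmetric) real $3\times3$ matrices. (This symbol corresponds to the Einstein-æther coupling choice $c_1=\Delta s_1^2$, $c_2=\Delta\Gamma$, $c_{13}=0$, $c_{14}=\Delta$.) *)

From Stdlib Require Import Reals Lra.
Open Scope R_scope.

Inductive idx : Type := i1 | i2 | i3.

Definition idx_eqb (a b : idx) : bool :=
  match a, b with
  | i1, i1 | i2, i2 | i3, i3 => true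
  | _, _ => false
  end.

Definition sum3 (f : idx -> R) : R := f i1 + f i2 + f i3.

Definition delta (a b : idx) : R := if idx_eqb a b then 1 else 0.

Definition eps (a b c : idx) : R :=
  match a, b, c with
  | i1, i2, i3 | i2, i3, i1 | i3, i1, i2 => 1
  | i1, i3, i2 | i3, i2, i1 | i2, i1, i3 => -1
  | _, _, _ => 0
  end.

Record state : Type := mkState {
  SK : idx -> idx -> R;
  SN : idx -> idx -> R;
  Sa : idx -> R }.

Definition trK (K : idx -> idx -> R) : R := sum3 (fun a => K a a).

Definition sigma (D G : R) : R := 3 * G * (1 + D * G).

Definition s1sq_den (D G : R) : R :=
  1 + D * G + (1 - D) * (1 + 3 * D * G + 3 * D ^ 2 * G ^ 2).

Definition s1sq (D G : R) : R := G * ((2 + 3 * D * G) / s1sq_den D G).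

Definition Pk (D G : R) (k : idx -> R) (V : state) : state :=
  let K := SK V in let N := SN V in let av := Sa V in
  mkState
    (fun a b =>
       sum3 (fun c => sum3 (fun d => eps a c d * k c * N d b)) + k a * av b
       - D / (2 + 3 * D * G) * delta a b *
         ((G - sigma D G) *
            sum3 (fun f => sum3 (fun c => sum3 (fun d => eps f c d * k f * N c d)))
          + (1 + G + D * sigma D G) * sum3 (fun c => k c * av c)))
    (fun a b =>
       - sum3 (fun c => sum3 (fun d => eps a c d * k c * K d b))
       + D * G * sum3 (fun c => eps a b c * k c) * trK K)
    (fun b =>
       s1sq D G * sum3 (fun a => k a * K a b)
       + (G - s1sq D G * (1 + D * G)) * k b * trK K).

Definition Hform (D G : R) (V1 V2 : state) : R :=
  sum3 (fun a => sum3 (fun b => SK V1 a b * SK V2 a b))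
  + sum3 (fun a => sum3 (fun b => SN V1 a b * SN V2 a b))
  + / s1sq D G * sum3 (fun b => Sa V1 b * Sa V2 b).

From Pilot Require Import Defs.
From Stdlib Require Import Reals Lra.
Open Scope R_scope.

(* Write B(V1,V2) := V1^T H P(k) V2.  Expanding the three blocks of H, every
   term of B is a contraction of one field of V1 with one field of V2:
   - the curl coupling  K1 . (k x N2)  and  -N1 . (k x K2), which are
     exchanged by the antisymmetry of the curl w.r.t. the Frobenius product;
   - the "longitudinal" coupling  (k^a K1_ab) a2^b  and  a1^b (k^a K2_ab);
   - the trace couplings  tr K1 * (eps k N2)  and  tr K1 * (k . a2), coming
     from the delta-term of K~, against  (eps k N1) * tr K2  from N~ and
     (k . a1) * tr K2  from a~.
   The trace couplings are symmetric exactly because of two coefficient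
   identities, one encoding the choice of sigma and one the choice of s1^2.
   After these identities B(V1,V2) is a manifestly symmetric expression. *)

Definition frob (M1 M2 : idx -> idx -> R) : R :=
  sum3 (fun a => sum3 (fun b => M1 a b * M2 a b)).

Definition dot (u v : idx -> R) : R := sum3 (fun c => u c * v c).

Definition curl (k : idx -> R) (M : idx -> idx -> R) (a b : idx) : R :=
  sum3 (fun c => sum3 (fun d => eps a c d * k c * M d b)).

(* eps^fcd k_f M_cd, the component of the antisymmetric part of M along k. *)
Definition axial (k : idx -> R) (M : idx -> idx -> R) : R :=
  sum3 (fun f => sum3 (fun c => sum3 (fun d => eps f c d * k f * M c d))).

Definition kdotM (k : idx -> R) (M : idx -> idx -> R) (b : idx) : R :=
  sum3 (fun a => k a * M a b).

(* Coefficient of the coupling between tr K and k . a in the symbol. *)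
Definition trace_coupling (D G : R) : R :=
  D / (2 + 3 * D * G) * (1 + G + D * Defs.sigma D G).

(* The curl is antisymmetric for the Frobenius pairing: the epsilon symbol
   changes sign under exchange of its first and last index. *)
Lemma frob_curl_skew (k : idx -> R) (M1 M2 : idx -> idx -> R) :
  frob M1 (curl k M2) = - frob M2 (curl k M1).
Proof. unfold frob, curl, sum3; simpl; ring. Qed.

Lemma Hform_blocks (D G : R) (V W : state) :
  Hform D G V W =
  frob (SK V) (SK W) + frob (SN V) (SN W) + / s1sq D G * dot (Sa V) (Sa W).
Proof. reflexivity. Qed.

Lemma frob_K_symbol (D G : R) (k : idx -> R) (K : idx -> idx -> R) (V : state) :
  frob K (SK (Pk D G k V)) =
  frob K (curl k (SN V)) + dot (kdotM k K) (Sa V)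
  + trK K * (- (D / (2 + 3 * D * G) * (G - Defs.sigma D G)) * axial k (SN V)
             - trace_coupling D G * dot k (Sa V)).
Proof.
  unfold Pk, frob, curl, dot, kdotM, axial, trace_coupling, trK, delta, sum3; simpl.
  ring.
Qed.

Lemma frob_N_symbol (D G : R) (k : idx -> R) (N : idx -> idx -> R) (V : state) :
  frob N (SN (Pk D G k V)) =
  - frob N (curl k (SK V)) + D * G * trK (SK V) * axial k N.
Proof. unfold Pk, frob, curl, axial, trK, sum3; simpl; ring. Qed.

Lemma dot_a_symbol (D G : R) (k a : idx -> R) (V : state) :
  s1sq D G <> 0 ->
  / s1sq D G * dot a (Sa (Pk D G k V)) =
  dot (kdotM k (SK V)) a
  + (G / s1sq D G - (1 + D * G)) * trK (SK V) * dot k a.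
Proof.
  intro hs; unfold Pk, dot, kdotM, trK, sum3; simpl.
  field; exact hs.
Qed.

(* The choice sigma = 3 G (1 + D G) balances the K--N trace couplings. *)
Lemma sigma_coupling (D G : R) :
  2 + 3 * D * G <> 0 ->
  - (D / (2 + 3 * D * G) * (G - Defs.sigma D G)) = D * G.
Proof. intro h2; unfold Defs.sigma; field; exact h2. Qed.

Lemma s1sq_neq0_G (D G : R) : s1sq D G <> 0 -> G <> 0.
Proof. intros hs hG; apply hs; unfold s1sq; rewrite hG; ring. Qed.

(* The choice of s1^2 balances the K--a trace couplings. *)
Lemma s1sq_coupling (D G : R) :
  2 + 3 * D * G <> 0 -> s1sq_den D G <> 0 -> s1sq D G <> 0 ->
  G / s1sq D G - (1 + D * G) = - trace_coupling D G.
Proof.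
  intros h2 hden hs.
  pose proof (s1sq_neq0_G D G hs) as hG.
  unfold s1sq, trace_coupling, Defs.sigma in *; unfold s1sq_den in *.
  field; repeat split; assumption.
Qed.

Theorem mainTheorem4 (D G : R)
  (h2 : 2 + 3 * D * G <> 0)
  (hden : s1sq_den D G <> 0)
  (hs : 0 < s1sq D G)
  (k : idx -> R)
  (hk : k i1 ^ 2 + k i2 ^ 2 + k i3 ^ 2 = 1)
  (V1 V2 : state) :
  Hform D G V1 (Pk D G k V2) = Hform D G V2 (Pk D G k V1).
Proof.
  assert (hs0 : s1sq D G <> 0) by lra.
  rewrite !Hform_blocks, !frob_K_symbol, !frob_N_symbol, !(dot_a_symbol D G k _ _ hs0).
  rewrite (sigma_coupling D G h2), (s1sq_coupling D G h2 hden hs0).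
  rewrite (frob_curl_skew k (SN V1)), (frob_curl_skew k (SN V2)).
  ring.
Qed.
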